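(* Let $X$ be a random variable in a sublinear expectation space and let $\{X^\alpha:\alpha\in\mathcal A\}$ be a family of random variables on a classical probability space $(\Omega',\mathcal F,P)$. Suppose that $$\hat{\mathbb E}[\varphi(X)]=\sup_{\alpha\in\mathcal A}E_P[\varphi(X^\alpha)]\quad\text{for all }\varphi\in C_{l.Lip}(\mathbb R).$$ Then for every continuity point $y$ of the upper cdf $\overline F_X$, $$\overline F_X(y)=\sup_{\alpha\in\mathcal A}P(X^\alpha\le y),$$ and for every continuity point $y$ of the lower cdf $\underline F_X$, $$\underline F_X(y)=\inf_{\alpha\in\mathcal A}P(X^\alpha\le y).$$
   Context: Sublinear expectation $\hat{\mathbb E}[Z]=\sup_{Q\in\mathcal P}E_Q[Z]$ for a family $\mathcal P$ of probability measures on $(\Omega,\mathcal F_0)$, defined in particular on indicators: upper probability $\mathbb V(A)=\hat{\mathbb E}[\mathbf 1_A]=\sup_{Q\in\mathcal P}Q(A)$. Upper cdf $\overline F_X(y)=\hat{\mathbb E}[\mathbf 1_{\{X\le y\}}]$; lower cdf $\underline F_X(y)=-\hat{\mathbb E}[-\mathbf 1_{\{X\le y\}}]$. $C_{l.Lip}(\mathbb R)$: functions with $|\varphi(x)-\varphi(y)|\le C_\varphi(1+|x|^k+|y|^k)|x-y|$ for some $k\in\mathbb N$, $C_\varphi>0$. *)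

From HB Require Import structures.
From mathcomp Require Import all_boot all_order all_algebra.
From mathcomp Require Import all_classical all_reals all_analysis.
Set Implicit Arguments. Unset Strict Implicit. Unset Printing Implicit Defensive.
Import Order.TTheory GRing.Theory Num.Theory.
Import numFieldNormedType.Exports.
Local Open Scope classical_set_scope.
Local Open Scope ring_scope.

Definition sublin_exp {d} {T : measurableType d} {R : realType}
  (Pset : set (probability T R)) (Z : T -> \bar R) : \bar R :=
  ereal_sup [set (\int[Q]_w Z w)%E | Q in Pset].

Definition upper_cdf {d} {T : measurableType d} {R : realType}
  (Pset : set (probability T R)) (X : T -> R) (y : R) : R :=
  fine (sublin_exp Pset (fun w => (\1_[set w | X w <= y] w)%:E)).

Definition lower_cdf {d} {T : measurableType d} {R : realType}
  (Pset : set (probability T R)) (X : T -> R) (y : R) : R :=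
  fine (- sublin_exp Pset (fun w => (- (\1_[set w | X w <= y] w)%:E)%E))%E.

Definition Clip {R : realType} (phi : R -> R) : Prop :=
  exists (C : R) (k : nat), 0 < C /\
    forall x y, `|phi x - phi y| <= C * (1 + `|x| ^+ k + `|y| ^+ k) * `|x - y|.

From HB Require Import structures.
From mathcomp Require Import all_boot all_order all_algebra.
From mathcomp Require Import all_classical all_reals all_analysis.
From mathcomp Require Import ring lra measurable_realfun.
Set Implicit Arguments. Unset Strict Implicit. Unset Printing Implicit Defensive.
Import Order.TTheory GRing.Theory Num.Theory.
Import numFieldNormedType.Exports.
Local Open Scope classical_set_scope.
Local Open Scope ring_scope.

(* The indicator of ]-oo, y] is squeezed between two Lipschitz ramps,
   1_{x <= y - e} <= ramp (y - e) y <= 1_{x <= y} <= ramp y (y + e) <= 1_{x <= y + e}.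
   Both sides of the representation are monotone in the test function and agree
   on ramps, so the cdf of one side at y lies between the cdf of the other side
   at y - e and y + e; continuity at y closes the gap as e -> 0. *)

Section ramp.
Context {R : realType}.
Implicit Types a b s t x z : R.

Lemma lipschitz_continuous (f : R -> R) (k : R) : 0 < k ->
  (forall x z, `|f x - f z| <= k * `|x - z|) -> continuous f.
Proof.
move=> k0 fk x; apply/cvgrPdist_lt => e e0.
apply/nbhs_ballP; exists (e / k) => /=; first by rewrite divr_gt0.
move=> z; rewrite /ball /= => xz.
by apply: le_lt_trans (fk x z) _; rewrite -ltr_pdivlMl // mulrC.
Qed.

Definition clamp01 t : R := if t <= 0 then 0 else if t <= 1 then t else 1.

Lemma clamp01_ge0 t : 0 <= clamp01 t.
Proof. by rewrite /clamp01; repeat (case: ifPn; rewrite -?ltNge => ?); lra. Qed.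

Lemma clamp01_le1 t : clamp01 t <= 1.
Proof. by rewrite /clamp01; repeat (case: ifPn; rewrite -?ltNge => ?); lra. Qed.

Lemma clamp01_lipschitz s t : `|clamp01 s - clamp01 t| <= `|s - t|.
Proof.
wlog st : s t / s <= t.
  by move=> W; case: (leP s t) => [/W//|/ltW/W]; rewrite distrC (distrC s).
have : 0 <= clamp01 t - clamp01 s <= t - s.
  by rewrite /clamp01; repeat (case: ifPn; rewrite -?ltNge => ?); apply/andP; split; lra.
by move=> /andP[? ?]; rewrite distrC (distrC s) !ger0_norm // subr_ge0.
Qed.

Definition ramp a b x : R := clamp01 ((b - x) / (b - a)).

Lemma ramp_ge0 a b x : 0 <= ramp a b x.
Proof. exact: clamp01_ge0. Qed.

Lemma ramp_lipschitz a b : a < b -> forall x z,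
  `|ramp a b x - ramp a b z| <= (b - a)^-1 * `|x - z|.
Proof.
move=> ab x z; apply: le_trans (clamp01_lipschitz _ _) _.
have ba_gt0 : 0 < (b - a)^-1 by rewrite invr_gt0 subr_gt0.
rewrite -mulrBl normrM (gtr0_norm ba_gt0) mulrC ler_wpM2l ?(ltW ba_gt0) //.
have -> : b - x - (b - z) = z - x by ring.
by rewrite distrC.
Qed.

Lemma ramp_measurable a b : a < b -> measurable_fun setT (ramp a b).
Proof.
move=> ab; apply: continuous_measurable_fun.
by apply: (lipschitz_continuous _ (ramp_lipschitz ab)); rewrite invr_gt0 subr_gt0.
Qed.

Lemma Clip_ramp a b : a < b -> Clip (ramp a b).
Proof.
move=> ab; exists (b - a)^-1, 0%N; split; first by rewrite invr_gt0 subr_gt0.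
move=> x z; apply: le_trans (ramp_lipschitz ab x z) _.
rewrite !expr0 ler_wpM2r // ler_peMr ?invr_ge0 ?subr_ge0 ?ltW //; lra.
Qed.

Lemma indic_le_ramp a b x : a < b -> \1_[set z | z <= a] x <= ramp a b x.
Proof.
move=> ab; rewrite indicE; case: (boolP (x \in _)); last by rewrite ramp_ge0.
rewrite inE /= => xa.
have : 1 <= (b - x) / (b - a) by rewrite ler_pdivlMr ?subr_gt0 // mul1r; lra.
by rewrite /ramp /clamp01; repeat (case: ifPn; rewrite -?ltNge => ?); lra.
Qed.

Lemma ramp_le_indic a b x : a < b -> ramp a b x <= \1_[set z | z <= b] x.
Proof.
move=> ab; rewrite indicE; case: (boolP (x \in _)) => [_|]; first exact: clamp01_le1.
rewrite notin_setE /= => /negP; rewrite -ltNge => bx.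
have : (b - x) / (b - a) <= 0 by rewrite ler_pdivrMr ?subr_gt0 // mul0r; lra.
by rewrite /ramp /clamp01; repeat (case: ifPn; rewrite -?ltNge => ?); lra.
Qed.

End ramp.

Lemma Clip_cst {R : realType} (c : R) : Clip (fun=> c).
Proof.
by exists 1, 0%N; split => // x z; rewrite subrr normr0 !mulr_ge0 // !addr_ge0.
Qed.

Lemma ClipN {R : realType} (phi : R -> R) : Clip phi -> Clip (fun x => - phi x).
Proof.
by case=> C [k [C0 phiC]]; exists C, k; split => // x z; rewrite -opprD normrN.
Qed.

Lemma continuous_squeeze {R : realType} (F : R -> R) (y : R) (G : \bar R) :
  {for y, continuous F} ->
  (forall e, 0 < e -> ((F (y - e))%:E <= G <= (F (y + e))%:E)%E) ->
  (F y)%:E = G.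
Proof.
move=> Fy FG; have [g Gg] : exists g, G = g%:E.
  have /andP[] := FG 1 ltr01.
  by case: G {FG} => [g _ _|_|]; [exists g|rewrite leye_eq|rewrite leeNy_eq].
move: FG; rewrite {}Gg => FG.
congr EFin; apply/le_anti/andP; split.
- apply: (cvgr_to_le (cvg_at_left_filter Fy)); near=> z.
  have zy : 0 < y - z by rewrite subr_gt0; near: z; exact: nbhs_left_lt.
  have /andP[+ _] := FG _ zy.
  by rewrite subKr lee_fin.
- apply: (cvgr_to_ge (cvg_at_right_filter Fy)); near=> z.
  have yz : 0 < z - y by rewrite subr_gt0; near: z; exact: nbhs_right_gt.
  have /andP[_] := FG _ yz.
  by rewrite subrKC lee_fin.
Unshelve. all: by end_near.
Qed.

Lemma ereal_sup_fin_num {R : realType} (S : set (\bar R)) (l u : R) :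
  S !=set0 -> (forall x, S x -> l%:E <= x <= u%:E)%E -> ereal_sup S \is a fin_num.
Proof.
move=> [x0 Sx0] Slu; apply: fin_real; apply/andP; split.
- apply: (lt_le_trans (ltNyr l)); have /andP[lx0 _] := Slu _ Sx0.
  by apply: le_trans lx0 _; apply: le_ereal_sup_tmp; exists x0.
- apply: (le_lt_trans _ (ltry u)); apply: ge_ereal_sup => x Sx.
  by have /andP[] := Slu _ Sx.
Qed.

Lemma ereal_inf_fin_num {R : realType} (S : set (\bar R)) (l u : R) :
  S !=set0 -> (forall x, S x -> l%:E <= x <= u%:E)%E -> ereal_inf S \is a fin_num.
Proof.
move=> [x0 Sx0] Slu; apply: fin_real; apply/andP; split.
- apply: (lt_le_trans (ltNyr l)); apply: le_ereal_inf_tmp => x Sx.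
  by have /andP[] := Slu _ Sx.
- apply: (le_lt_trans _ (ltry u)); have /andP[_ x0u] := Slu _ Sx0.
  by apply: le_trans _ x0u; apply: ge_ereal_inf; exists x0.
Qed.

Lemma measurable_le_set {R : realType} d (T : measurableType d) (Y : T -> R) (y : R) :
  measurable_fun setT Y -> measurable [set w | Y w <= y].
Proof.
move=> mY; have := mY measurableT _ (measurable_itv `]-oo, y]).
by rewrite setTI; congr measurable; apply/seteqP; split => w /=; rewrite in_itv.
Qed.

Section integral_comp.
Context {R : realType} {d : measure_display} {T : measurableType d}.
Variables (mu : {measure set T -> \bar R}) (Y : T -> R).

Lemma ge0_le_integral_comp (phi psi : R -> R) : measurable_fun setT Y ->
  measurable_fun setT phi -> measurable_fun setT psi ->
  (forall x, 0 <= phi x) -> (forall x, phi x <= psi x) ->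
  (\int[mu]_w (phi (Y w))%:E <= \int[mu]_w (psi (Y w))%:E)%E.
Proof.
move=> mY mphi mpsi phi0 phipsi; apply: ge0_le_integral => //.
- by move=> w _; rewrite lee_fin.
- by apply/measurable_EFinP; apply: measurableT_comp.
- by apply/measurable_EFinP; apply: measurableT_comp.
- by move=> w _; rewrite lee_fin.
Qed.

Lemma integral_indic_le (y : R) : measurable_fun setT Y ->
  (\int[mu]_w (\1_[set x | x <= y] (Y w))%:E)%E = mu [set w | Y w <= y].
Proof.
move=> mY; transitivity (\int[mu]_w (\1_[set w | Y w <= y] w)%:E)%E => //.
by rewrite integral_indic ?setIT //; exact: measurable_le_set.
Qed.

Lemma integralN_ge0 (f : T -> R) : (forall w, 0 <= f w) ->
  (\int[mu]_w (- f w)%:E = - \int[mu]_w (f w)%:E)%E.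
Proof.
move=> f0; under eq_integral do rewrite EFinN.
apply: integralN; apply: fin_num_adde_defl; rewrite fin_numN.
rewrite (eq_integral (cst 0%E)) ?integral0 //.
by apply: ge0_funenegE => w _; rewrite lee_fin.
Qed.

End integral_comp.

Definition ge0_monotone {R : realType} (M : (R -> R) -> \bar R) : Prop :=
  forall phi psi : R -> R, measurable_fun setT phi -> measurable_fun setT psi ->
  (forall x, 0 <= phi x) -> (forall x, phi x <= psi x) -> (M phi <= M psi)%E.

(* [sup_expect Pset id (fun=> X) phi] is [sublin_exp Pset] of [phi \o X], and
   [sup_expect setT (fun=> P) Xa phi] is [sup_a E_P[phi (Xa a)]]. *)
Section family_expectation.
Context {R : realType} {d : measure_display} {T : measurableType d} {I : Type}.
Variables (D : set I) (mu : I -> probability T R) (Y : I -> T -> R).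
Hypothesis mY : forall i, measurable_fun setT (Y i).

Definition sup_expect (phi : R -> R) : \bar R :=
  ereal_sup [set (\int[mu i]_w (phi (Y i w))%:E)%E | i in D].

Definition inf_expect (phi : R -> R) : \bar R :=
  ereal_inf [set (\int[mu i]_w (phi (Y i w))%:E)%E | i in D].

Lemma sup_expect_monotone : ge0_monotone sup_expect.
Proof.
move=> phi psi mphi mpsi phi0 phipsi; apply: ge_ereal_sup => _ [i Di <-].
apply: le_trans (ge0_le_integral_comp (mu i) (mY i) mphi mpsi phi0 phipsi) _.
by apply: le_ereal_sup_tmp; exists (\int[mu i]_w (psi (Y i w))%:E)%E => //; exists i.
Qed.

Lemma inf_expect_monotone : ge0_monotone inf_expect.
Proof.
move=> phi psi mphi mpsi phi0 phipsi; apply: le_ereal_inf_tmp => _ [i Di <-].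
apply: le_trans _ (ge0_le_integral_comp (mu i) (mY i) mphi mpsi phi0 phipsi).
by apply: ge_ereal_inf; exists (\int[mu i]_w (phi (Y i w))%:E)%E => //; exists i.
Qed.

Lemma inf_expectE (phi : R -> R) : (forall x, 0 <= phi x) ->
  inf_expect phi = (- sup_expect (fun x => (- phi x)%R))%E.
Proof.
move=> phi0; rewrite /inf_expect ereal_infEN image_comp; congr (- _)%E.
by rewrite /sup_expect; congr ereal_sup; apply: eq_imagel => i _ /=; rewrite integralN_ge0.
Qed.

Lemma sup_expect_indic (y : R) : sup_expect (\1_[set x | x <= y]) =
  ereal_sup [set mu i [set w | Y i w <= y] | i in D].
Proof. by congr ereal_sup; apply: eq_imagel => i _; rewrite integral_indic_le. Qed.

Lemma inf_expect_indic (y : R) : inf_expect (\1_[set x | x <= y]) =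
  ereal_inf [set mu i [set w | Y i w <= y] | i in D].
Proof. by congr ereal_inf; apply: eq_imagel => i _; rewrite integral_indic_le. Qed.

Lemma probability_le_set01 (y : R) (i : I) :
  (0 <= mu i [set w | (Y i w <= y)%R] <= 1)%E.
Proof.
by rewrite measure_ge0 probability_le1 //; exact: measurable_le_set.
Qed.

Lemma sup_expect_indic_fin_num (y : R) : D !=set0 ->
  sup_expect (\1_[set x | x <= y]) \is a fin_num.
Proof.
move=> [i0 Di0]; rewrite sup_expect_indic; apply: (@ereal_sup_fin_num _ _ 0 1).
  by exists (mu i0 [set w | Y i0 w <= y]); exists i0.
by move=> _ [i _ <-]; exact: probability_le_set01.
Qed.

Lemma inf_expect_indic_fin_num (y : R) : D !=set0 ->
  inf_expect (\1_[set x | x <= y]) \is a fin_num.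
Proof.
move=> [i0 Di0]; rewrite inf_expect_indic; apply: (@ereal_inf_fin_num _ _ 0 1).
  by exists (mu i0 [set w | Y i0 w <= y]); exists i0.
by move=> _ [i _ <-]; exact: probability_le_set01.
Qed.

End family_expectation.

Lemma indic_le_of_ramp_eq {R : realType} {M1 M2 : (R -> R) -> \bar R} {a b : R} :
  ge0_monotone M1 -> ge0_monotone M2 ->
  (forall s t, s < t -> M1 (ramp s t) = M2 (ramp s t)) -> a < b ->
  (M1 (\1_[set x | (x <= a)%R]) <= M2 (\1_[set x | (x <= b)%R]))%E.
Proof.
move=> M1_mono M2_mono M12 ab.
have mindic c : measurable_fun setT (\1_[set x : R | x <= c] : R -> R).
  by apply: measurable_indic; exact: (@measurable_le_set _ _ _ id).
apply: (@le_trans _ _ (M1 (ramp a b))).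
  by apply: M1_mono => // [|x]; [exact: ramp_measurable|exact: indic_le_ramp].
rewrite M12 //; apply: M2_mono => // [|x|x]; first exact: ramp_measurable.
- exact: ramp_ge0.
- exact: ramp_le_indic.
Qed.

Lemma cdf_eq_of_ramp_eq {R : realType} {M1 M2 : (R -> R) -> \bar R} {F : R -> R} {y : R} :
  ge0_monotone M1 -> ge0_monotone M2 ->
  (forall s t, s < t -> M1 (ramp s t) = M2 (ramp s t)) ->
  (forall z, (F z)%:E = M1 (\1_[set x | x <= z])) -> {for y, continuous F} ->
  (F y)%:E = M2 (\1_[set x | x <= y]).
Proof.
move=> M1_mono M2_mono M12 FM1 Fy; apply: continuous_squeeze => // e e0.
rewrite !FM1; apply/andP; split.
- by apply: indic_le_of_ramp_eq => //; lra.
- apply: indic_le_of_ramp_eq => // [s t st|]; [by rewrite M12|lra].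
Qed.

Section cdf.
Context {R : realType} {d : measure_display} {T : measurableType d}.
Variables (Pset : set (probability T R)) (X : T -> R).
Hypotheses (mX : measurable_fun setT X) (Pset0 : Pset !=set0).

Lemma upper_cdfE (z : R) :
  (upper_cdf Pset X z)%:E = sup_expect Pset id (fun=> X) (\1_[set x | x <= z]).
Proof. by rewrite fineK //; exact: sup_expect_indic_fin_num. Qed.

Lemma lower_cdfE (z : R) :
  (lower_cdf Pset X z)%:E = inf_expect Pset id (fun=> X) (\1_[set x | x <= z]).
Proof.
have indic_ge0 x : 0 <= \1_[set u : R | u <= z] x by rewrite indicE ler0n.
rewrite /lower_cdf.
have -> : sublin_exp Pset (fun w => (- (\1_[set w | X w <= z] w)%:E)%E) =
    sup_expect Pset id (fun=> X) (fun x => - \1_[set x | x <= z] x).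
  by congr ereal_sup; apply: eq_imagel => Q _; apply: eq_integral => w _; rewrite EFinN.
by rewrite -inf_expectE // fineK //; exact: inf_expect_indic_fin_num.
Qed.

End cdf.

Theorem mainTheorem11 (R : realType)
  (d : measure_display) (T : measurableType d) (Pset : set (probability T R))
  (X : T -> R) (mX : measurable_fun setT X)
  (* X lies in the sublinear expectation space: phi(X) is integrable under
     every Q in Pset and Ehat[phi(X)] is finite, for all phi in C_{l.Lip} *)
  (hint : forall phi : R -> R, Clip phi ->
     forall Q, Pset Q -> Q.-integrable setT (fun w => (phi (X w))%:E))
  (hfin : forall phi : R -> R, Clip phi ->
     sublin_exp Pset (fun w => (phi (X w))%:E) \is a fin_num)
  (d' : measure_display) (T' : measurableType d') (P : probability T' R)
  (A : Type) (Xa : A -> T' -> R) (mXa : forall a, measurable_fun setT (Xa a))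
  (hrep : forall phi : R -> R, Clip phi ->
     sublin_exp Pset (fun w => (phi (X w))%:E) =
     ereal_sup [set (\int[P]_w (phi (Xa a w))%:E)%E | a in [set: A]]) :
  (forall y : R, {for y, continuous (upper_cdf Pset X)} ->
     (upper_cdf Pset X y)%:E =
     ereal_sup [set P [set w | Xa a w <= y] | a in [set: A]]) /\
  (forall y : R, {for y, continuous (lower_cdf Pset X)} ->
     (lower_cdf Pset X y)%:E =
     ereal_inf [set P [set w | Xa a w <= y] | a in [set: A]]).
Proof.
have Pset0 : Pset !=set0.
  apply/set0P/negP => /eqP Pset0; have := hfin _ (Clip_cst 0).
  by rewrite /sublin_exp Pset0 image_set0 ereal_sup0.
split => y Fy.
- rewrite -(sup_expect_indic _ _ mXa).
  apply: (cdf_eq_of_ramp_eq (sup_expect_monotone Pset id (fun=> mX))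
                            (sup_expect_monotone _ _ mXa)) => //.
  + by move=> s t st; exact: hrep (Clip_ramp st).
  + exact: upper_cdfE.
- rewrite -(inf_expect_indic _ _ mXa).
  apply: (cdf_eq_of_ramp_eq (inf_expect_monotone Pset id (fun=> mX))
                            (inf_expect_monotone _ _ mXa)) => //.
  + move=> s t st; have ramp0 x : 0 <= ramp s t x by exact: ramp_ge0.
    by rewrite !inf_expectE //; congr (- _)%E; exact: hrep (ClipN (Clip_ramp st)).
  + exact: lower_cdfE.
Qed.
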